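(* Let $\{|\mu_0\rangle,|\mu_1\rangle\}$ and $\{|\nu_0\rangle,|\nu_1\rangle\}$ be orthonormal bases of $\mathbb{C}^2$, $N$ the projective measurement $\{|\nu_0\rangle\langle\nu_0|,|\nu_1\rangle\langle\nu_1|\}$, and $c=\max_{x,y}|\langle\mu_x|\nu_y\rangle|^2$. Let $a\in\{0,1\}$, $w\in[0,1]$, $\delta>0$, and let $J\subseteq\{i\in\{0,1\}^n: w_a(i)\le w+\delta\}$. Let $\mathcal{H}_C$ be any finite-dimensional Hilbert space and let $$|\phi'\rangle=\sum_{i\in J}\alpha_i\,|\mu_{i_1}\rangle\otimes\cdots\otimes|\mu_{i_n}\rangle\otimes|C_i\rangle\in(\mathbb{C}^2)^{\otimes n}\otimes\mathcal{H}_C$$ be a unit vector, where $|C_i\rangle\in\mathcal{H}_C$ are arbitrary unit vectors (not necessarily orthogonal). Then the reduced state $\sigma=\mathrm{tr}_C|\phi'\rangle\langle\phi'|$ on the $n$ qubits satisfies $$H_\infty(N)_\sigma\ \ge\ -n\log_2 c-n\,\bar H(w+\delta).$$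
   Context: $w_a(i)=|\{l: i_l\ne a\}|/n$ is the relative $a$-Hamming weight. $\bar H(x)=-x\log_2x-(1-x)\log_2(1-x)$ for $x\in[0,1/2]$, $\bar H(x)=0$ for $x<0$, $\bar H(x)=1$ for $x>1/2$. For a state $\sigma$ on $(\mathbb{C}^2)^{\otimes n}$, $H_\infty(N)_\sigma=-\log_2\max_{j\in\{0,1\}^n}\langle\nu_{j_1}\cdots\nu_{j_n}|\sigma|\nu_{j_1}\cdots\nu_{j_n}\rangle$. *)

From Stdlib Require Import Reals List.
Import ListNotations.
Open Scope R_scope.

Definition Cx : Type := (R * R)%type.
Definition C0 : Cx := (0, 0).
Definition Cadd (z w : Cx) : Cx := (fst z + fst w, snd z + snd w).
Definition Cmul (z w : Cx) : Cx :=
  (fst z * fst w - snd z * snd w, fst z * snd w + snd z * fst w).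
Definition Cconj (z : Cx) : Cx := (fst z, - snd z).
Definition Cnorm2 (z : Cx) : R := fst z * fst z + snd z * snd z.

Definition Csum {A : Type} (l : list A) (f : A -> Cx) : Cx :=
  fold_right (fun x acc => Cadd (f x) acc) C0 l.
Definition Rsum {A : Type} (l : list A) (f : A -> R) : R :=
  fold_right (fun x acc => f x + acc) 0 l.

(** * Qubit space C^2: vectors are functions bool -> C (basis |0>,|1>) *)
Definition qubit := bool -> Cx.
Definition inner2 (u v : qubit) : Cx :=
  Cadd (Cmul (Cconj (u false)) (v false)) (Cmul (Cconj (u true)) (v true)).
Definition Ckron (b1 b2 : bool) : Cx := if Bool.eqb b1 b2 then (1, 0) else C0.
Definition orthonormal_basis (e : bool -> qubit) : Prop :=
  forall x y, inner2 (e x) (e y) = Ckron x y.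

Fixpoint bitstrings (n : nat) : list (list bool) :=
  match n with
  | O => [ [] ]
  | S m => map (cons false) (bitstrings m) ++ map (cons true) (bitstrings m)
  end.

Definition weight (a : bool) (i : list bool) : R :=
  INR (length (filter (fun b => negb (Bool.eqb b a)) i)) / INR (length i).

(** product vector |e_{i_1}> ⊗ ... ⊗ |e_{i_n}>, as a function of the
    computational-basis index x ∈ {0,1}^n (coordinates of a tensor product) *)
Fixpoint prod_vec (e : bool -> qubit) (i x : list bool) : Cx :=
  match i, x with
  | [], [] => (1, 0)
  | b :: i', y :: x' => Cmul (e b y) (prod_vec e i' x')
  | _, _ => C0
  end.

Definition log2 (x : R) : R := ln x / ln 2.

Definition Hbar (x : R) : R :=
  if Rlt_dec x 0 then 0
  else if Rle_dec x (1/2) then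
         (if Req_EM_T x 0 then 0 else - x * log2 x - (1 - x) * log2 (1 - x))
       else 1.

Definition overlap_c (mu nu : bool -> qubit) : R :=
  Rmax (Rmax (Cnorm2 (inner2 (mu false) (nu false))) (Cnorm2 (inner2 (mu false) (nu true))))
       (Rmax (Cnorm2 (inner2 (mu true) (nu false))) (Cnorm2 (inner2 (mu true) (nu true)))).

(** * The state |phi'> in (C^2)^{⊗n} ⊗ C^d.
    Its coordinate at (x, k), x ∈ {0,1}^n, k < d:
    sum_{i ∈ J} alpha_i <x|mu_{i_1}...mu_{i_n}> C_i(k) *)
Definition phi_state (n : nat) (mu : bool -> qubit) (J : list bool -> bool)
  (alpha : list bool -> Cx) (Cv : list bool -> nat -> Cx) (x : list bool) (k : nat) : Cx :=
  Csum (filter J (bitstrings n)) (fun i => Cmul (alpha i) (Cmul (prod_vec mu i x) (Cv i k))).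

Definition normC_sq (d : nat) (v : nat -> Cx) : R := Rsum (seq 0 d) (fun k => Cnorm2 (v k)).

Definition norm_joint_sq (n d : nat) (phi : list bool -> nat -> Cx) : R :=
  Rsum (bitstrings n) (fun x => Rsum (seq 0 d) (fun k => Cnorm2 (phi x k))).

(** reduced state sigma = tr_C |phi><phi|, matrix entries <x|sigma|y> *)
Definition partial_trace_C (d : nat) (phi : list bool -> nat -> Cx) (x y : list bool) : Cx :=
  Csum (seq 0 d) (fun k => Cmul (phi x k) (Cconj (phi y k))).

Definition expect (n : nat) (sigma : list bool -> list bool -> Cx) (v : list bool -> Cx) : Cx :=
  Csum (bitstrings n) (fun x => Csum (bitstrings n) (fun y =>
    Cmul (Cconj (v x)) (Cmul (sigma x y) (v y)))).

(** max of a real function over a list (0 on the empty list; never empty here) *)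
Definition Rmax_list {A : Type} (l : list A) (f : A -> R) : R :=
  match l with
  | [] => 0
  | x :: l' => fold_right (fun y acc => Rmax (f y) acc) (f x) l'
  end.

Definition Hmin_N (n : nat) (nu : bool -> qubit) (sigma : list bool -> list bool -> Cx) : R :=
  - log2 (Rmax_list (bitstrings n) (fun j => fst (expect n sigma (prod_vec nu j)))).

(** The outcome probability of [nu_j] in [sigma] is [sum_k |<nu_j|phi_k>|^2], where
    [phi_k = sum_(i in J) alpha_i C_i(k) mu_i] is the [k]-th slice of [phi'].  By
    Cauchy-Schwarz and [sum_i |alpha_i|^2 = 1] it is at most
    [sum_(i in J) |<nu_j|mu_i>|^2 <= |J| c^n].  Comparing with the Bernoulli([x])
    distribution on [{0,1}^n], [x = w + delta], whose weights are all at least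
    [2^(-n H(x))] on strings with at most [n x] disagreements with [a], gives
    [|J| <= 2^(n Hbar(x))]. *)

From Stdlib Require Import Reals List Lra Lia.
Import ListNotations.
Open Scope R_scope.

Ltac cx_ring := repeat match goal with z : Cx |- _ => destruct z end;
  unfold Cadd, Cmul, Cconj, C0, Cnorm2; apply injective_projections; simpl; ring.

Lemma Csum_ext {A} (l : list A) f g : (forall x, In x l -> f x = g x) -> Csum l f = Csum l g.
Proof. induction l; simpl; intros H; auto. rewrite H, IHl; auto. Qed.

Lemma Rsum_ext {A} (l : list A) f g : (forall x, In x l -> f x = g x) -> Rsum l f = Rsum l g.
Proof. induction l; simpl; intros H; auto. rewrite H, IHl; auto. Qed.

Lemma Csum_app {A} (l1 l2 : list A) f : Csum (l1 ++ l2) f = Cadd (Csum l1 f) (Csum l2 f).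
Proof. induction l1; simpl. cx_ring. rewrite IHl1. cx_ring. Qed.

Lemma Rsum_app {A} (l1 l2 : list A) f : Rsum (l1 ++ l2) f = Rsum l1 f + Rsum l2 f.
Proof. induction l1; simpl. ring. rewrite IHl1. ring. Qed.

Lemma Csum_map {A B} (l : list B) (h : B -> A) f : Csum (map h l) f = Csum l (fun x => f (h x)).
Proof. induction l; simpl; auto. rewrite IHl; auto. Qed.

Lemma Rsum_map {A B} (l : list B) (h : B -> A) f : Rsum (map h l) f = Rsum l (fun x => f (h x)).
Proof. induction l; simpl; auto. rewrite IHl; auto. Qed.

Lemma Csum_add {A} (l : list A) f g :
  Csum l (fun x => Cadd (f x) (g x)) = Cadd (Csum l f) (Csum l g).
Proof. induction l; simpl. cx_ring. rewrite IHl. cx_ring. Qed.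

Lemma Rsum_add {A} (l : list A) f g : Rsum l (fun x => f x + g x) = Rsum l f + Rsum l g.
Proof. induction l; simpl. ring. rewrite IHl. ring. Qed.

Lemma Csum_mul_l {A} (l : list A) c f : Csum l (fun x => Cmul c (f x)) = Cmul c (Csum l f).
Proof. induction l; simpl. cx_ring. rewrite IHl. cx_ring. Qed.

Lemma Rsum_mul_l {A} (l : list A) c f : Rsum l (fun x => c * f x) = c * Rsum l f.
Proof. induction l; simpl. ring. rewrite IHl. ring. Qed.

Lemma Rsum_const {A} (l : list A) c : Rsum l (fun _ => c) = INR (length l) * c.
Proof. induction l; simpl length; [simpl; ring|]. rewrite S_INR; simpl; rewrite IHl; ring. Qed.

Lemma Csum_conj {A} (l : list A) f : Cconj (Csum l f) = Csum l (fun x => Cconj (f x)).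
Proof. induction l; simpl. cx_ring. rewrite <- IHl. cx_ring. Qed.

Lemma fst_Csum {A} (l : list A) f : fst (Csum l f) = Rsum l (fun x => fst (f x)).
Proof. induction l; simpl; auto. rewrite IHl; auto. Qed.

Lemma Csum_filter {A} (l : list A) (J : A -> bool) f :
  Csum (filter J l) f = Csum l (fun x => if J x then f x else C0).
Proof. induction l; simpl; auto. destruct (J a); simpl; rewrite IHl; auto. cx_ring. Qed.

Lemma Rsum_filter {A} (l : list A) (J : A -> bool) f :
  Rsum (filter J l) f = Rsum l (fun x => if J x then f x else 0).
Proof. induction l; simpl; auto. destruct (J a); simpl; rewrite IHl; auto. ring. Qed.

Lemma Rsum_le {A} (l : list A) f g : (forall x, In x l -> f x <= g x) -> Rsum l f <= Rsum l g.
Proof.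
  induction l; simpl; intros H; [lra|].
  assert (f a <= g a) by auto. assert (Rsum l f <= Rsum l g) by auto. lra.
Qed.

Lemma Rsum_ge0 {A} (l : list A) f : (forall x, In x l -> 0 <= f x) -> 0 <= Rsum l f.
Proof. intros H. apply Rle_trans with (Rsum l (fun _ => 0)); [|now apply Rsum_le].
  rewrite Rsum_const; lra. Qed.

Lemma Csum_swap {A B} (l1 : list A) (l2 : list B) f :
  Csum l1 (fun x => Csum l2 (fun y => f x y)) = Csum l2 (fun y => Csum l1 (fun x => f x y)).
Proof.
  induction l1; simpl.
  - induction l2; simpl; auto. rewrite <- IHl2. cx_ring.
  - rewrite IHl1. symmetry. apply (Csum_add l2 (f a)).
Qed.

Lemma Rsum_swap {A B} (l1 : list A) (l2 : list B) f :
  Rsum l1 (fun x => Rsum l2 (fun y => f x y)) = Rsum l2 (fun y => Rsum l1 (fun x => f x y)).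
Proof.
  induction l1; simpl.
  - rewrite Rsum_const; ring.
  - rewrite IHl1. symmetry. apply (Rsum_add l2 (f a)).
Qed.

Lemma Cmul_Csum_Csum {A B} (l1 : list A) (l2 : list B) f g :
  Cmul (Csum l1 f) (Csum l2 g) = Csum l1 (fun x => Csum l2 (fun y => Cmul (f x) (g y))).
Proof.
  induction l1; simpl. cx_ring.
  rewrite <- IHl1, Csum_mul_l. cx_ring.
Qed.

Lemma Cnorm2_ge0 z : 0 <= Cnorm2 z.
Proof. unfold Cnorm2. nra. Qed.

Lemma Cnorm2_mul z w : Cnorm2 (Cmul z w) = Cnorm2 z * Cnorm2 w.
Proof. destruct z, w; unfold Cnorm2, Cmul; simpl; ring. Qed.

Lemma Cnorm2_conj z : Cnorm2 (Cconj z) = Cnorm2 z.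
Proof. destruct z; unfold Cnorm2, Cconj; simpl; ring. Qed.

Lemma Cnorm2_add_eq0 z w : Cadd z w = C0 -> Cnorm2 z = Cnorm2 w.
Proof.
  destruct z as [z1 z2], w as [w1 w2]; unfold Cadd, C0, Cnorm2; simpl.
  intros H; injection H; intros. replace z1 with (- w1) by lra. replace z2 with (- w2) by lra. ring.
Qed.

Lemma fst_Cmul_conj z : fst (Cmul z (Cconj z)) = Cnorm2 z.
Proof. destruct z; unfold Cmul, Cconj, Cnorm2; simpl; ring. Qed.

Lemma Cnorm2_inner2_sym u v : Cnorm2 (inner2 u v) = Cnorm2 (inner2 v u).
Proof.
  rewrite <- Cnorm2_conj. f_equal. unfold inner2.
  destruct (u false), (u true), (v false), (v true); cx_ring.
Qed.

Lemma fst_inner2_self u : fst (inner2 u u) = Cnorm2 (u false) + Cnorm2 (u true).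
Proof. unfold inner2. destruct (u false), (u true). unfold Cadd, Cmul, Cconj, Cnorm2; simpl; ring. Qed.

Lemma unitary2_rows (p q r s : Cx) :
  Cnorm2 p + Cnorm2 q = 1 -> Cnorm2 r + Cnorm2 s = 1 ->
  Cadd (Cmul (Cconj p) r) (Cmul (Cconj q) s) = C0 ->
  Cnorm2 p + Cnorm2 r = 1 /\ Cnorm2 q + Cnorm2 s = 1 /\
  Cadd (Cmul p (Cconj q)) (Cmul r (Cconj s)) = C0.
Proof.
  intros Hpq Hrs Horth.
  assert (Hnorms : Cnorm2 p * Cnorm2 r = Cnorm2 q * Cnorm2 s).
  { rewrite <- (Cnorm2_conj p), <- (Cnorm2_conj q), <- !Cnorm2_mul.
    now apply Cnorm2_add_eq0. }
  assert (Hpr : Cnorm2 p + Cnorm2 r = 1) by nra.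
  split; [exact Hpr | split; [lra |]].
  set (X := Cadd (Cmul p (Cconj q)) (Cmul r (Cconj s))).
  (* [X] is killed by both [conj p] and [conj r], hence by [|p|^2 + |r|^2 = 1]. *)
  assert (HpX : Cmul (Cconj p) X = C0).
  { transitivity (Cadd (Cmul (Cadd (Cmul (Cconj p) r) (Cmul (Cconj q) s)) (Cconj s))
                       (Cmul (Cconj q) (Cnorm2 p - Cnorm2 s, 0))); [unfold X; cx_ring|].
    rewrite Horth. replace (Cnorm2 p - Cnorm2 s) with 0 by lra. cx_ring. }
  assert (HrX : Cmul (Cconj r) X = C0).
  { transitivity (Cadd (Cmul (Cconj (Cadd (Cmul (Cconj p) r) (Cmul (Cconj q) s))) (Cconj q))
                       (Cmul (Cconj s) (Cnorm2 r - Cnorm2 q, 0))); [unfold X; cx_ring|].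
    rewrite Horth. replace (Cnorm2 r - Cnorm2 q) with 0 by lra. cx_ring. }
  transitivity (Cadd (Cmul p (Cmul (Cconj p) X)) (Cmul r (Cmul (Cconj r) X))).
  - transitivity (Cmul (Cnorm2 p + Cnorm2 r, 0) X); [rewrite Hpr|]; unfold X; cx_ring.
  - rewrite HpX, HrX. cx_ring.
Qed.

Lemma qubit_parseval (e : bool -> qubit) (v : qubit) : orthonormal_basis e ->
  Cnorm2 (inner2 (e false) v) + Cnorm2 (inner2 (e true) v) = Cnorm2 (v false) + Cnorm2 (v true).
Proof.
  intros He.
  assert (Hnorm : forall b, Cnorm2 (e b false) + Cnorm2 (e b true) = 1).
  { intros b. rewrite <- fst_inner2_self, He. now destruct b. }
  destruct (unitary2_rows (e false false) (e false true) (e true false) (e true true))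
    as [Hcol0 [Hcol1 Hcross]]; auto; [apply (He false true)|].
  assert (Hexp : Cnorm2 (inner2 (e false) v) + Cnorm2 (inner2 (e true) v) =
    (Cnorm2 (e false false) + Cnorm2 (e true false)) * Cnorm2 (v false) +
    (Cnorm2 (e false true) + Cnorm2 (e true true)) * Cnorm2 (v true) +
    2 * fst (Cmul (Cmul (Cconj (v false)) (v true))
                  (Cadd (Cmul (e false false) (Cconj (e false true)))
                        (Cmul (e true false) (Cconj (e true true)))))).
  { unfold inner2. destruct (e false false), (e false true), (e true false), (e true true),
      (v false), (v true). unfold Cadd, Cmul, Cconj, Cnorm2; simpl; ring. }
  rewrite Hexp, Hcol0, Hcol1, Hcross. unfold C0, Cmul; simpl; ring.
Qed.

Lemma Cnorm2_inner2_le_overlap_c mu nu x y :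
  Cnorm2 (inner2 (mu x) (nu y)) <= overlap_c mu nu.
Proof.
  unfold overlap_c. destruct x, y.
  - eapply Rle_trans; [apply Rmax_r | apply Rmax_r].
  - eapply Rle_trans; [apply Rmax_l | apply Rmax_r].
  - eapply Rle_trans; [apply Rmax_r | apply Rmax_l].
  - eapply Rle_trans; [apply Rmax_l | apply Rmax_l].
Qed.

Lemma overlap_c_ge_half mu nu : orthonormal_basis mu -> orthonormal_basis nu ->
  1 / 2 <= overlap_c mu nu.
Proof.
  intros Hmu Hnu.
  pose proof (qubit_parseval nu (mu false) Hnu) as H.
  rewrite <- fst_inner2_self, Hmu, !(Cnorm2_inner2_sym (nu _)) in H; simpl in H.
  pose proof (Cnorm2_inner2_le_overlap_c mu nu false false).
  pose proof (Cnorm2_inner2_le_overlap_c mu nu false true).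
  lra.
Qed.

(* The cross term of [|z + t|^2] obeys [2 Re (z conj t) <= 2 sqrt (AB ST) <= AT + BS]. *)
Lemma Cnorm2_add_le z t A B S T :
  0 <= A -> 0 <= B -> 0 <= S -> 0 <= T ->
  Cnorm2 z = A * B -> Cnorm2 t <= S * T -> Cnorm2 (Cadd z t) <= (A + S) * (B + T).
Proof.
  destruct z as [z1 z2], t as [t1 t2]; unfold Cnorm2, Cadd; simpl; intros.
  assert (Hcs : (z1*t1 + z2*t2)^2 <= (A*B) * (S*T)).
  { assert (0 <= (z1*t2 - z2*t1)^2) by apply pow2_ge_0. nra. }
  assert (Hamgm : 4 * (A*B) * (S*T) <= (A*T + B*S)^2).
  { assert (0 <= (A*T - B*S)^2) by apply pow2_ge_0. nra. }
  assert (Hcross : 2 * (z1*t1 + z2*t2) <= A*T + B*S).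
  { destruct (Rle_or_lt (2 * (z1*t1 + z2*t2)) (A*T + B*S)); [assumption|].
    assert (0 <= A*T + B*S) by nra. nra. }
  nra.
Qed.

Lemma Cauchy_Schwarz_Csum {X} (L : list X) (a b : X -> Cx) :
  Cnorm2 (Csum L (fun i => Cmul (a i) (b i))) <=
  Rsum L (fun i => Cnorm2 (a i)) * Rsum L (fun i => Cnorm2 (b i)).
Proof.
  induction L as [|x L IH]; simpl.
  - unfold Cnorm2, C0; simpl; lra.
  - apply Cnorm2_add_le; auto using Cnorm2_ge0, Cnorm2_mul.
    all: apply Rsum_ge0; intros; apply Cnorm2_ge0.
Qed.

(** * Product vectors in (C^2)^{⊗n} *)

Definition tensor_inner (n : nat) (u v : list bool -> Cx) : Cx :=
  Csum (bitstrings n) (fun x => Cmul (Cconj (u x)) (v x)).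

Fixpoint prod_inner (e f : bool -> qubit) (i j : list bool) : Cx :=
  match i, j with
  | [], [] => (1, 0)
  | b :: i', b' :: j' => Cmul (inner2 (e b) (f b')) (prod_inner e f i' j')
  | _, _ => C0
  end.

Lemma In_bitstrings n x : In x (bitstrings n) <-> length x = n.
Proof.
  revert x; induction n as [|n IH]; intros x; simpl.
  - split; [now intros [<-|[]] | destruct x; simpl; [auto | discriminate]].
  - rewrite in_app_iff, !in_map_iff. split.
    + intros [[y [<- Hy]]|[y [<- Hy]]]; simpl; f_equal; apply IH; auto.
    + destruct x as [|b x]; simpl; [discriminate|]. intros [= Hx].
      destruct b; [right|left]; exists x; split; auto; apply IH; auto.
Qed.

Lemma NoDup_bitstrings n : NoDup (bitstrings n).
Proof.
  induction n; simpl; [repeat constructor; intros []|].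
  apply NoDup_app; try (apply NoDup_map_NoDup_ForallPairs; auto; now intros x y _ _ [= ->]).
  intros x H1 H2. apply in_map_iff in H1, H2.
  destruct H1 as [y [<- _]], H2 as [z [H _]]. discriminate.
Qed.

Lemma bitstrings_neq_nil n : bitstrings n <> [].
Proof.
  intros Hnil. apply (in_nil (a := repeat false n)). rewrite <- Hnil.
  apply In_bitstrings, repeat_length.
Qed.

Lemma length_bitstrings n : length (bitstrings n) = (2 ^ n)%nat.
Proof. induction n; simpl; auto. rewrite length_app, !length_map, IHn. lia. Qed.

Lemma Csum_bitstrings_S n g : Csum (bitstrings (S n)) g =
  Cadd (Csum (bitstrings n) (fun x => g (false :: x))) (Csum (bitstrings n) (fun x => g (true :: x))).
Proof. simpl. now rewrite Csum_app, !Csum_map. Qed.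

Lemma Rsum_bitstrings_S n g : Rsum (bitstrings (S n)) g =
  Rsum (bitstrings n) (fun x => g (false :: x)) + Rsum (bitstrings n) (fun x => g (true :: x)).
Proof. simpl. now rewrite Rsum_app, !Rsum_map. Qed.

Lemma tensor_inner_mul_r n u c v :
  tensor_inner n u (fun x => Cmul c (v x)) = Cmul c (tensor_inner n u v).
Proof. unfold tensor_inner. rewrite <- Csum_mul_l. apply Csum_ext; intros; cx_ring. Qed.

Lemma tensor_inner_cons e n b j v :
  tensor_inner (S n) (prod_vec e (b :: j)) v =
  inner2 (e b) (fun y => tensor_inner n (prod_vec e j) (fun x => v (y :: x))).
Proof.
  unfold tensor_inner, inner2. rewrite Csum_bitstrings_S, <- !Csum_mul_l.
  f_equal; apply Csum_ext; intros; simpl; cx_ring.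
Qed.

Lemma tensor_inner_prod_vec e f n i j : length i = n -> length j = n ->
  tensor_inner n (prod_vec e i) (prod_vec f j) = prod_inner e f i j.
Proof.
  revert i j; induction n as [|n IH]; intros [|b i] [|b' j] Hi Hj; try discriminate.
  - unfold tensor_inner; simpl; cx_ring.
  - injection Hi as Hi; injection Hj as Hj.
    rewrite tensor_inner_cons; simpl.
    rewrite <- (IH i j Hi Hj). unfold inner2.
    rewrite !tensor_inner_mul_r. cx_ring.
Qed.

Lemma prod_inner_orthonormal e (He : orthonormal_basis e) i j : length i = length j ->
  prod_inner e e i j = if list_eq_dec Bool.bool_dec i j then (1, 0) else C0.
Proof.
  revert j; induction i as [|b i IH]; intros [|b' j] H; try discriminate; simpl.
  - reflexivity.
  - injection H as H. rewrite He, IH by auto.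
    destruct (list_eq_dec Bool.bool_dec i j), (list_eq_dec Bool.bool_dec (b :: i) (b' :: j)),
      b, b'; unfold Ckron; simpl; try congruence; cx_ring.
Qed.

Lemma Cnorm2_prod_inner_le mu nu j i : length i = length j ->
  Cnorm2 (prod_inner nu mu j i) <= overlap_c mu nu ^ length j.
Proof.
  revert i; induction j as [|b j IH]; intros [|b' i] H; try discriminate; simpl.
  - unfold Cnorm2; simpl; lra.
  - injection H as H. rewrite Cnorm2_mul, Cnorm2_inner2_sym.
    apply Rmult_le_compat; auto using Cnorm2_ge0, Cnorm2_inner2_le_overlap_c.
Qed.

Lemma tensor_parseval e (He : orthonormal_basis e) n v :
  Rsum (bitstrings n) (fun j => Cnorm2 (tensor_inner n (prod_vec e j) v)) =
  Rsum (bitstrings n) (fun x => Cnorm2 (v x)).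
Proof.
  revert v; induction n as [|n IH]; intros v.
  - unfold tensor_inner; simpl. destruct (v []). unfold Cnorm2, Cmul, Cconj, Cadd, C0; simpl; ring.
  - rewrite !Rsum_bitstrings_S.
    rewrite !(Rsum_ext _ (fun j => Cnorm2 (tensor_inner (S n) (prod_vec e (_ :: j)) v)) _
                (fun j _ => f_equal Cnorm2 (tensor_inner_cons e n _ j v))).
    rewrite <- Rsum_add, (Rsum_ext _ _ _ (fun j _ => qubit_parseval e _ He)), Rsum_add.
    now rewrite !IH.
Qed.

Lemma Csum_kronecker (L : list (list bool)) (z : list bool -> Cx) i : NoDup L -> In i L ->
  Csum L (fun i' => if list_eq_dec Bool.bool_dec i i' then z i' else C0) = z i.
Proof.
  induction L as [|i0 L IH]; simpl; intros Hnd Hi; [destruct Hi|].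
  inversion Hnd as [|? ? Hi0 HL]; subst.
  destruct (list_eq_dec Bool.bool_dec i i0) as [<-|Hne].
  - rewrite (Csum_ext _ _ (fun x => Cmul C0 (z x))), Csum_mul_l; [cx_ring|].
    intros x Hx. destruct (list_eq_dec Bool.bool_dec i x); [congruence | cx_ring].
  - destruct Hi as [<-|Hi]; [congruence|]. rewrite IH; auto. cx_ring.
Qed.

Lemma expect_partial_trace n d (phi : list bool -> nat -> Cx) v :
  fst (expect n (partial_trace_C d phi) v) =
  Rsum (seq 0 d) (fun k => Cnorm2 (tensor_inner n v (fun x => phi x k))).
Proof.
  unfold expect, partial_trace_C.
  rewrite (Csum_ext _ _ (fun x => Csum (seq 0 d) (fun k => Csum (bitstrings n) (fun y =>
    Cmul (Cmul (Cconj (v x)) (phi x k)) (Cmul (Cconj (phi y k)) (v y)))))).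
  2:{ intros x _. rewrite <- Csum_swap. apply Csum_ext. intros y _.
      transitivity (Csum (seq 0 d) (fun k =>
        Cmul (Cmul (Cconj (v x)) (v y)) (Cmul (phi x k) (Cconj (phi y k))))).
      - rewrite Csum_mul_l. cx_ring.
      - apply Csum_ext; intros; cx_ring. }
  rewrite Csum_swap, fst_Csum. apply Rsum_ext. intros k _.
  rewrite <- Cmul_Csum_Csum, <- fst_Cmul_conj. f_equal. f_equal.
  unfold tensor_inner. rewrite Csum_conj. apply Csum_ext; intros; cx_ring.
Qed.

Lemma Rsum_expect_prod_vec nu (Hnu : orthonormal_basis nu) n d phi :
  norm_joint_sq n d phi = 1 ->
  Rsum (bitstrings n) (fun j => fst (expect n (partial_trace_C d phi) (prod_vec nu j))) = 1.
Proof.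
  intros H. rewrite <- H. unfold norm_joint_sq.
  rewrite (Rsum_ext _ _ _ (fun j _ => expect_partial_trace n d phi (prod_vec nu j))).
  rewrite Rsum_swap, (Rsum_swap (bitstrings n)). apply Rsum_ext. intros k _.
  apply tensor_parseval; auto.
Qed.

Section PhiState.
Variables (mu : bool -> qubit) (n d : nat) (J : list bool -> bool).
Variables (alpha : list bool -> Cx) (Cv : list bool -> nat -> Cx).
Let phi := phi_state n mu J alpha Cv.

Lemma tensor_inner_phi_state e j k : length j = n ->
  tensor_inner n (prod_vec e j) (fun x => phi x k) =
  Csum (filter J (bitstrings n)) (fun i => Cmul (alpha i) (Cmul (Cv i k) (prod_inner e mu j i))).
Proof.
  intros Hj. unfold tensor_inner, phi, phi_state.
  rewrite (Csum_ext _ _ (fun x => Csum (filter J (bitstrings n)) (fun i =>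
    Cmul (Cmul (alpha i) (Cv i k)) (Cmul (Cconj (prod_vec e j x)) (prod_vec mu i x))))).
  2:{ intros x _. rewrite <- Csum_mul_l. apply Csum_ext; intros; cx_ring. }
  rewrite Csum_swap. apply Csum_ext. intros i Hi.
  apply filter_In, proj1, In_bitstrings in Hi.
  rewrite Csum_mul_l. change (Csum _ _) with (tensor_inner n (prod_vec e j) (prod_vec mu i)).
  rewrite tensor_inner_prod_vec by auto. cx_ring.
Qed.

Hypothesis Hmu : orthonormal_basis mu.
Hypothesis HC : forall i, In i (bitstrings n) -> J i = true -> normC_sq d (Cv i) = 1.
Hypothesis Hphi : norm_joint_sq n d phi = 1.

Lemma tensor_inner_mu_phi_state j k : In j (bitstrings n) ->
  tensor_inner n (prod_vec mu j) (fun x => phi x k) =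
  if J j then Cmul (alpha j) (Cv j k) else C0.
Proof.
  intros Hj. rewrite tensor_inner_phi_state by now apply In_bitstrings.
  rewrite Csum_filter.
  rewrite (Csum_ext _ _ (fun i => if list_eq_dec Bool.bool_dec j i
                                  then (if J i then Cmul (alpha i) (Cv i k) else C0) else C0)).
  - apply Csum_kronecker; auto using NoDup_bitstrings.
  - intros i Hi. apply In_bitstrings in Hi, Hj.
    rewrite prod_inner_orthonormal by (auto; congruence).
    destruct (list_eq_dec Bool.bool_dec j i), (J i); cx_ring.
Qed.

Lemma Rsum_Cnorm2_alpha : Rsum (filter J (bitstrings n)) (fun i => Cnorm2 (alpha i)) = 1.
Proof.
  rewrite <- Hphi. unfold norm_joint_sq. rewrite Rsum_swap.
  rewrite (Rsum_ext (seq 0 d) _ (fun k => Rsum (filter J (bitstrings n))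
                                   (fun i => Cnorm2 (alpha i) * Cnorm2 (Cv i k)))).
  - rewrite Rsum_swap. apply Rsum_ext. intros i Hi. rewrite Rsum_mul_l.
    apply filter_In in Hi. unfold normC_sq in HC. rewrite HC by tauto. ring.
  - intros k _. rewrite <- (tensor_parseval mu Hmu n), Rsum_filter.
    apply Rsum_ext. intros j Hj. rewrite tensor_inner_mu_phi_state by auto.
    destruct (J j); [apply Cnorm2_mul | unfold Cnorm2, C0; simpl; ring].
Qed.

Lemma expect_prod_vec_le nu j : In j (bitstrings n) ->
  fst (expect n (partial_trace_C d phi) (prod_vec nu j)) <=
  INR (length (filter J (bitstrings n))) * overlap_c mu nu ^ n.
Proof.
  intros Hj. apply In_bitstrings in Hj. rewrite expect_partial_trace.
  set (J' := filter J (bitstrings n)).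
  apply Rle_trans with (Rsum (seq 0 d) (fun k =>
    Rsum J' (fun i => Cnorm2 (Cv i k) * Cnorm2 (prod_inner nu mu j i)))).
  - apply Rsum_le. intros k _. rewrite tensor_inner_phi_state by auto.
    eapply Rle_trans; [apply Cauchy_Schwarz_Csum|].
    unfold J'. rewrite Rsum_Cnorm2_alpha, Rmult_1_l.
    apply Req_le, Rsum_ext. intros. apply Cnorm2_mul.
  - rewrite Rsum_swap, <- Rsum_const. apply Rsum_le. intros i Hi.
    rewrite (Rsum_ext _ _ (fun k => Cnorm2 (prod_inner nu mu j i) * Cnorm2 (Cv i k))) by (intros; ring).
    apply filter_In in Hi. destruct Hi as [Hi HJ].
    pose proof (HC i Hi HJ) as HCi. unfold normC_sq in HCi.
    rewrite Rsum_mul_l, HCi, Rmult_1_r, <- Hj.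
    apply Cnorm2_prod_inner_le. apply In_bitstrings in Hi. congruence.
Qed.

End PhiState.

(** * Counting strings of small Hamming distance *)

Definition hamming (a : bool) (i : list bool) : nat :=
  length (filter (fun b => negb (Bool.eqb b a)) i).

Fixpoint bernoulli (x : R) (a : bool) (i : list bool) : R :=
  match i with
  | [] => 1
  | b :: i' => (if Bool.eqb b a then 1 - x else x) * bernoulli x a i'
  end.

Lemma ln_le x y : 0 < x -> x <= y -> ln x <= ln y.
Proof. intros Hx [Hxy|<-]; [left; now apply ln_increasing | lra]. Qed.

Lemma exp_le x y : x <= y -> exp x <= exp y.
Proof. intros [Hxy|<-]; [left; now apply exp_increasing | lra]. Qed.

Lemma hamming_le_length a i : (hamming a i <= length i)%nat.
Proof. apply filter_length_le. Qed.

Lemma bernoulli_eq x a i :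
  bernoulli x a i = x ^ hamming a i * (1 - x) ^ (length i - hamming a i).
Proof.
  induction i as [|b i IH]; [simpl; ring|].
  pose proof (hamming_le_length a i) as Hle. unfold hamming in *.
  cbn [bernoulli length filter]. rewrite IH.
  destruct (Bool.eqb b a); cbn [negb length].
  - rewrite Nat.sub_succ_l by exact Hle. simpl; ring.
  - simpl; ring.
Qed.

Lemma bernoulli_ge0 x a i : 0 <= x <= 1 -> 0 <= bernoulli x a i.
Proof.
  intros Hx. induction i as [|b i IH]; simpl; [lra|].
  destruct (Bool.eqb b a); apply Rmult_le_pos; lra.
Qed.

Lemma Rsum_bernoulli x a n : Rsum (bitstrings n) (bernoulli x a) = 1.
Proof.
  induction n as [|n IH]; [simpl; ring|].
  rewrite Rsum_bitstrings_S. simpl bernoulli. rewrite !Rsum_mul_l, IH.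
  destruct a; simpl; ring.
Qed.

Lemma bernoulli_ge_entropy x a i : 0 < x <= 1 / 2 ->
  INR (hamming a i) <= INR (length i) * x ->
  exp (INR (length i) * (x * ln x + (1 - x) * ln (1 - x))) <= bernoulli x a i.
Proof.
  intros Hx Hk. rewrite bernoulli_eq.
  rewrite <- (exp_ln (x ^ _ * (1 - x) ^ _)) by (apply Rmult_lt_0_compat; apply pow_lt; lra).
  apply exp_le.
  rewrite ln_mult, !ln_pow, minus_INR
    by first [apply hamming_le_length | apply pow_lt; lra | lra].
  (* [ln x <= ln (1 - x)], so replacing disagreements by agreements only lowers the weight. *)
  assert (ln x <= ln (1 - x)) by (apply ln_le; lra).
  nra.
Qed.

Lemma card_hamming_ball_le x a n (J : list bool -> bool) : 0 < x ->
  (forall i, In i (bitstrings n) -> J i = true -> INR (hamming a i) <= INR n * x) ->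
  INR (length (filter J (bitstrings n))) <= Rpower 2 (INR n * Hbar x).
Proof.
  intros Hx HJ. assert (Hln2 : 0 < ln 2) by (pose proof ln_lt_2; lra).
  unfold Hbar. destruct (Rlt_dec x 0) as [|_]; [lra|].
  destruct (Rle_dec x (1 / 2)) as [Hx2|_].
  - destruct (Req_EM_T x 0) as [|_]; [lra|].
    set (ent := x * ln x + (1 - x) * ln (1 - x)).
    (* Every string of [J] carries Bernoulli weight at least [2^(-n H(x))]. *)
    assert (Hcount : INR (length (filter J (bitstrings n))) * exp (INR n * ent) <= 1).
    { rewrite <- Rsum_const, <- (Rsum_bernoulli x a n), Rsum_filter.
      apply Rsum_le. intros i Hi. destruct (J i) eqn:HJi.
      - apply In_bitstrings in Hi as Hlen. rewrite <- Hlen.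
        apply bernoulli_ge_entropy; [lra | rewrite Hlen; auto].
      - apply bernoulli_ge0; lra. }
    unfold Rpower, log2.
    replace (INR n * _ * ln 2) with (- (INR n * ent)) by (unfold ent; field; lra).
    rewrite exp_Ropp. apply Rmult_le_reg_r with (exp (INR n * ent)); [apply exp_pos|].
    rewrite Rinv_l by (apply Rgt_not_eq, exp_pos). exact Hcount.
  - rewrite Rmult_1_r, Rpower_pow by lra.
    apply Rle_trans with (INR (length (bitstrings n))); [apply le_INR, filter_length_le|].
    rewrite length_bitstrings, pow_INR. right; f_equal; simpl; lra.
Qed.

Lemma hamming_le_of_weight_le a i x : weight a i <= x ->
  INR (hamming a i) <= INR (length i) * x.
Proof.
  unfold weight. fold (hamming a i). intros Hw.
  destruct i as [|b i]; [simpl; lra|].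
  assert (Hlen : 0 < INR (length (b :: i))) by (apply lt_0_INR; simpl; lia).
  apply Rmult_le_compat_r with (r := INR (length (b :: i))) in Hw; [|lra].
  unfold Rdiv in Hw. rewrite Rmult_assoc, Rinv_l in Hw by lra. lra.
Qed.

Lemma Rmax_list_ge {X} (l : list X) f j : In j l -> f j <= Rmax_list l f.
Proof.
  destruct l as [|x l]; [intros []|]. simpl.
  assert (Hfold : forall d, d <= fold_right (fun y acc => Rmax (f y) acc) d l /\
    (forall j, In j l -> f j <= fold_right (fun y acc => Rmax (f y) acc) d l)).
  { intros d. induction l as [|y l [IH1 IH2]]; simpl; [split; [lra | intros _ []]|].
    split; [eapply Rle_trans; [exact IH1 | apply Rmax_r]|].
    intros j' [<-|Hj']; [apply Rmax_l | eapply Rle_trans; [apply IH2; auto | apply Rmax_r]]. }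
  intros [<-|Hj]; [apply (proj1 (Hfold _)) | apply (proj2 (Hfold _)); auto].
Qed.

Lemma Rmax_list_le {X} (l : list X) f B : l <> [] ->
  (forall j, In j l -> f j <= B) -> Rmax_list l f <= B.
Proof.
  destruct l as [|x l]; simpl; [congruence|]. intros _ H.
  induction l as [|y l IH]; simpl; auto.
  apply Rmax_lub; [apply H; simpl; auto|].
  apply IH. intros j [<-|Hj]; apply H; simpl; auto.
Qed.

Lemma Rsum_le_Rmax_list {X} (l : list X) f : Rsum l f <= INR (length l) * Rmax_list l f.
Proof.
  rewrite <- Rsum_const. apply Rsum_le. intros. now apply Rmax_list_ge.
Qed.

Lemma log2_mul_pow_le M h c n : 0 < M -> 0 < c -> M <= Rpower 2 h * c ^ n ->
  log2 M <= h + INR n * log2 c.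
Proof.
  intros HM Hc Hle. assert (Hln2 : 0 < ln 2) by (pose proof ln_lt_2; lra).
  unfold log2. apply Rmult_le_reg_r with (ln 2); [exact Hln2|].
  replace ((h + INR n * (ln c / ln 2)) * ln 2) with (ln (Rpower 2 h * c ^ n))
    by (rewrite ln_mult, ln_Rpower, ln_pow by first [apply exp_pos | apply pow_lt; lra | lra];
        field; lra).
  replace (ln M / ln 2 * ln 2) with (ln M) by (field; lra).
  now apply ln_le.
Qed.

Theorem mainTheorem2
  (mu nu : bool -> qubit)
  (Hmu : orthonormal_basis mu) (Hnu : orthonormal_basis nu)
  (n : nat) (a : bool) (w delta : R)
  (Hw : 0 <= w <= 1) (Hdelta : 0 < delta)
  (J : list bool -> bool)
  (HJ : forall i, In i (bitstrings n) -> J i = true -> weight a i <= w + delta)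
  (d : nat) (alpha : list bool -> Cx) (Cv : list bool -> nat -> Cx)
  (HC : forall i, In i (bitstrings n) -> J i = true -> normC_sq d (Cv i) = 1)
  (Hphi : norm_joint_sq n d (phi_state n mu J alpha Cv) = 1) :
  Hmin_N n nu (partial_trace_C d (phi_state n mu J alpha Cv))
    >= - INR n * log2 (overlap_c mu nu) - INR n * Hbar (w + delta).
Proof.
  set (sigma := partial_trace_C d (phi_state n mu J alpha Cv)).
  set (M := Rmax_list (bitstrings n) (fun j => fst (expect n sigma (prod_vec nu j)))).
  set (K := INR (length (filter J (bitstrings n)))).
  set (c := overlap_c mu nu).
  assert (Hc : 1 / 2 <= c) by now apply overlap_c_ge_half.
  assert (HM_le : M <= K * c ^ n).
  { apply Rmax_list_le; [apply bitstrings_neq_nil|].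
    intros j Hj. now apply expect_prod_vec_le. }
  assert (HM_pos : 0 < M).
  { pose proof (Rsum_le_Rmax_list (bitstrings n) (fun j => fst (expect n sigma (prod_vec nu j))))
      as Hsum.
    unfold sigma in Hsum. rewrite Rsum_expect_prod_vec in Hsum by auto. fold sigma M in Hsum.
    pose proof (pos_INR (length (bitstrings n))). nra. }
  assert (HK : K <= Rpower 2 (INR n * Hbar (w + delta))).
  { apply card_hamming_ball_le with (a := a); [lra|].
    intros i Hi HJi. apply In_bitstrings in Hi as Hlen. rewrite <- Hlen.
    apply hamming_le_of_weight_le; auto. }
  assert (Hlog : log2 M <= INR n * Hbar (w + delta) + INR n * log2 c).
  { apply log2_mul_pow_le; [exact HM_pos | lra|].
    apply Rle_trans with (1 := HM_le).
    apply Rmult_le_compat_r; [apply pow_le|]; lra. }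
  unfold Hmin_N. fold sigma M c. lra.
Qed.
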